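(* Let $\mathbb{S}=(S,\Sigma,\{\tau_a\mid a\in L\})$ be an LMP. Then $\sigma(\llbracket\mathcal{L}\rrbracket)\subseteq\mathcal{G}(\sigma(\llbracket\mathcal{L}\rrbracket))$ and $\mathcal{O}(\sim_e)\subseteq{\sim_e}$.
   Context: A labelled Markov process (LMP) is a triple $\mathbb{S}=(S,\Sigma,\{\tau_a\mid a\in L\})$ where $(S,\Sigma)$ is a measurable space, $L$ is a countable set of labels, and each $\tau_a:S\times\Sigma\to[0,1]$ is a Markov kernel: $\tau_a(s,\cdot)$ is a subprobability measure on $\Sigma$ for every $s$, and $\tau_a(\cdot,X)$ is $\Sigma$-measurable for every $X\in\Sigma$. For a relation $R\subseteq S\times S$, a set $A\subseteq S$ is $R$-closed if $x\in A$ and $xRs$ imply $s\in A$; $\Sigma(R)$ denotes the family of $R$-closed sets belonging to $\Sigma$. For $\Gamma\subseteq\mathcal{P}(S)$, $\mathcal{R}(\Gamma)=\{(s,t):\forall A\in\Gamma\ (s\in A\iff t\in A)\}$. For $\Lambda\subseteq\Sigma$, $\mathcal{R}^T(\Lambda)=\{(s,t):\forall a\in L\ \forall E\in\Lambda\ \tau_a(s,E)=\tau_a(t,E)\}$. Operators: $\mathcal{O}(R)=\mathcal{R}^T(\Sigma(R))$ for relations $R$ and $\mathcal{G}(\Lambda)=\Sigma(\mathcal{R}^T(\Lambda))$ for $\Lambda\subseteq\Sigma$. The logic $\mathcal{L}$ has formulas $\phi::=\top\mid\phi_1\wedge\phi_2\mid\langle a\rangle_{>q}\phi$ ($a\in L$,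 $q\in\mathbb{Q}\cap[0,1]$) with $\llbracket\top\rrbracket=S$, $\llbracket\phi\wedge\psi\rrbracket=\llbracket\phi\rrbracket\cap\llbracket\psi\rrbracket$, $\llbracket\langle a\rangle_{>q}\phi\rrbracket=\{s:\tau_a(s,\llbracket\phi\rrbracket)>q\}$; $\sigma(\llbracket\mathcal{L}\rrbracket)$ is the $\sigma$-algebra generated by all $\llbracket\phi\rrbracket$. Event bisimilarity is ${\sim_e}=\mathcal{R}(\sigma(\llbracket\mathcal{L}\rrbracket))$. *)

From HB Require Import structures.
From mathcomp Require Import all_boot all_order all_algebra.
From mathcomp Require Import all_classical all_reals.
From mathcomp Require Import ereal measure kernel.
Set Implicit Arguments. Unset Strict Implicit. Unset Printing Implicit Defensive.
Import Order.TTheory GRing.Theory Num.Theory.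
Local Open Scope classical_set_scope.
Local Open Scope ring_scope.

Inductive formula (L : Type) : Type :=
| FTop : formula L
| FAnd : formula L -> formula L -> formula L
| FDiam : L -> forall q : rat, (0 <= q <= 1)%R -> formula L -> formula L.

Section LMP.
Context {d : measure_display} {S : measurableType d} {R : realType}
  {L : countType} (tau : L -> R.-spker S ~> S).

Fixpoint sem (phi : formula L) : set S :=
  match phi with
  | FTop => setT
  | FAnd p1 p2 => sem p1 `&` sem p2
  | FDiam a q _ p => [set s | ((ratr q)%:E < tau a s (sem p))%E]
  end.

Definition sigmaL : set (set S) := <<s range sem >>.

Definition Rclosed (Rel : S -> S -> Prop) (A : set S) : Prop :=
  forall x s, A x -> Rel x s -> A s.

Definition SigmaR (Rel : S -> S -> Prop) : set (set S) :=
  [set A | measurable A /\ Rclosed Rel A].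

Definition RelOf (Gamma : set (set S)) : S -> S -> Prop :=
  fun s t => forall A, Gamma A -> (A s <-> A t).

Definition RT (Lam : set (set S)) : S -> S -> Prop :=
  fun s t => forall (a : L) (E : set S), Lam E -> tau a s E = tau a t E.

Definition opO (Rel : S -> S -> Prop) : S -> S -> Prop := RT (SigmaR Rel).
Definition opG (Lam : set (set S)) : set (set S) := SigmaR (RT Lam).

Definition sim_e : S -> S -> Prop := RelOf sigmaL.

End LMP.

(* Both inclusions follow from a single invariance principle.  Call a
   relation Rel "[[L]]-faithful" when Rel-related states give every
   transition kernel the same value on every formula semantics [[phi]].
   For such a relation every set of sigma([[L]]) is Rel-invariant: the
   Rel-invariant sets form a sigma-algebra (for any relation), and each
   [[phi]] is Rel-invariant by induction on phi, the modal case being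
   exactly faithfulness.  Since sigma([[L]]) consists of measurable sets
   (kernels are measurable in the state), it remains to check that the
   two relations at hand are faithful:
   - R^T(sigma([[L]])) is, because every [[phi]] lies in sigma([[L]]);
   - O(~_e) is, because every set of sigma([[L]]) is measurable and
     ~_e-closed by the very definition of ~_e. *)

From HB Require Import structures.
From mathcomp Require Import all_boot all_order all_algebra.
From mathcomp Require Import all_classical all_reals.
From mathcomp Require Import ereal measure kernel.
From mathcomp Require Import measurable_realfun.
Local Open Scope classical_set_scope.

Lemma invariant_sets_sigma_algebra {T : Type} (Rel : T -> T -> Prop) :
  sigma_algebra setT [set A : set T | forall x y, Rel x y -> (A x <-> A y)].
Proof.
split.
- by move=> x y _; split.
- move=> A invA x y Rxy; have [Axy Ayx] := invA x y Rxy.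
  by split=> -[_ nA]; split=> // ?; apply: nA; auto.
- move=> F invF x y Rxy.
  by split=> -[n _ Fn]; exists n => //; apply (invF n x y Rxy).
Qed.

Lemma invariant_Rclosed {d : measure_display} {T : measurableType d}
    (Rel : T -> T -> Prop) (A : set T) :
  (forall x y, Rel x y -> (A x <-> A y)) -> Rclosed Rel A.
Proof. by move=> invA x y Ax Rxy; apply/(invA x y Rxy). Qed.

Section EventInvariance.
Context {d : measure_display} {S : measurableType d}
  {R : realType} {L : countType} (tau : L -> R.-spker S ~> S).

(* Every formula denotes a measurable set: the modal case is the preimage
   of an open ray under the measurable map s |-> tau a s [[phi]]. *)
Lemma sem_measurable (phi : formula L) : measurable (sem tau phi).
Proof.
elim: phi => [|p1 IH1 p2 IH2|a q _ p IH] /=.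
- exact: measurableT.
- exact: measurableI.
- have := emeasurable_fun_o_infty measurableT
    (measurable_kernel (tau a) _ IH) (ratr q)%:E.
  by rewrite setTI.
Qed.

Lemma sem_in_sigmaL (phi : formula L) : sigmaL tau (sem tau phi).
Proof. by apply: sub_sigma_algebra; exists phi. Qed.

Lemma sigmaL_measurable : sigmaL tau `<=` measurable.
Proof.
apply: smallest_sub; first exact: sigma_algebra_measurable.
by move=> _ [phi _ <-]; exact: sem_measurable.
Qed.

Definition semL_faithful (Rel : S -> S -> Prop) : Prop :=
  forall x y, Rel x y -> forall a phi, tau a x (sem tau phi) = tau a y (sem tau phi).

Lemma sigmaL_invariant {Rel : S -> S -> Prop} : semL_faithful Rel ->
  forall {A}, sigmaL tau A -> forall {x y}, Rel x y -> (A x <-> A y).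
Proof.
move=> faithful; apply: smallest_sub; first exact: invariant_sets_sigma_algebra.
move=> _ [phi _ <-]; elim: phi => [|p1 IH1 p2 IH2|a q _ p _] x y Rxy /=.
- by [].
- by have [? ?] := IH1 x y Rxy; have [? ?] := IH2 x y Rxy; split=> -[]; auto.
- by rewrite (faithful x y Rxy a p).
Qed.

Lemma sigmaL_sub_Sigma_sim_e : sigmaL tau `<=` SigmaR (sim_e tau).
Proof.
move=> A sA; split; first exact: sigmaL_measurable.
by apply: invariant_Rclosed => x y; apply.
Qed.

Lemma RT_sigmaL_faithful : semL_faithful (RT tau (sigmaL tau)).
Proof. by move=> x y Rxy a phi; apply: Rxy; exact: sem_in_sigmaL. Qed.

Lemma opO_sim_e_faithful : semL_faithful (opO tau (sim_e tau)).
Proof.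
move=> x y Oxy a phi; apply: Oxy.
by apply: sigmaL_sub_Sigma_sim_e; exact: sem_in_sigmaL.
Qed.

End EventInvariance.

Theorem corollary3p5 (d : measure_display) (S : measurableType d)
  (R : realType) (L : countType) (tau : L -> R.-spker S ~> S) :
  sigmaL tau `<=` opG tau (sigmaL tau) /\
  (forall s t : S, opO tau (sim_e tau) s t -> sim_e tau s t).
Proof.
split.
- move=> A sA; split; first exact: (sigmaL_measurable tau A sA).
  apply: invariant_Rclosed => x y.
  exact: (sigmaL_invariant tau (RT_sigmaL_faithful tau) sA).
- move=> s t Ost A sA.
  exact: (sigmaL_invariant tau (opO_sim_e_faithful tau) sA Ost).
Qed.
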